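(* Let $\mathbf{V}$ be a vertical weak adhesive HLR category with respect to a stable system of monics $\mathcal{M}$. If pushouts along $\mathcal{M}$-morphisms are stable under pullbacks in $\mathbf{V}$, then $\mathbf{V}$ is also a horizontal weak adhesive HLR category with respect to $\mathcal{M}$ (and hence a weak adhesive HLR category).
   Context: A stable system of monics $\mathcal{M}$: class of monomorphisms containing all isomorphisms, closed under composition, stable under pullback. Van Kampen (VK) square: a pushout square (bottom face) such that for every commutative cube over it whose two back vertical faces (those containing the vertical morphism into the apex of the span) are pullbacks, the top face is a pushout iff the two front vertical faces are pullbacks. A vertical weak VK square: the same condition required only for cubes whose four vertical morphisms are in $\mathcal{M}$. $\mathbf{V}$ is a vertical weak adhesive HLR category w.r.t. $\mathcal{M}$ if (V-i) it has pullbacks of cospans $A\to B\leftarrow B'$ with $B'\to B$ in $\mathcal{M}$, (V-ii) it has pushouts of spans $A\leftarrow B\to B'$ with $B\to B'$ in $\mathcal{M}$, and in such pushouts the morphism opposite to the $\mathcal{M}$-leg is in $\mathcal{M}$, (V-iii) pushouts along $\mathcal{M}$-morphisms are vertical weak VK squares. It is a horizontal weak adhesive HLR category w.r.t. $\mathcal{M}$ if it satisfies (V-i), (V-ii) and (H-iii): every pushout square all four of whose morphisms are in $\mathcal{M}$ is a VK square. A weak adhesive HLR category is one that is both. ''Pushouts along $\mathcal{M}$-morphisms are stable under pullbacks'': for every commutative cube whose bottom face is a pushout of a span with one leg in $\mathcal{M}$ and whose four vertical faces are pullbacks (vertical morphisms arbitrary), the top face is a pushout. *)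

Set Implicit Arguments.
Unset Strict Implicit.

Record Category := {
  Ob :> Type;
  Hom : Ob -> Ob -> Type;
  idm : forall A, Hom A A;
  comp : forall A B C, Hom B C -> Hom A B -> Hom A C;
  comp_assoc : forall A B C D (h : Hom C D) (g : Hom B C) (f : Hom A B),
      comp h (comp g f) = comp (comp h g) f;
  comp_id_l : forall A B (f : Hom A B), comp (idm B) f = f;
  comp_id_r : forall A B (f : Hom A B), comp f (idm A) = f
}.

Arguments Hom {_} _ _.
Arguments idm {_} _.
Arguments comp {_ _ _ _} _ _.

Section Cat.
Variable C : Category.

Definition MorClass := forall A B : C, @Hom C A B -> Prop.

Definition is_mono {A B : C} (f : Hom A B) : Prop :=
  forall Z (g h : Hom Z A), comp f g = comp f h -> g = h.

Definition is_iso {A B : C} (f : Hom A B) : Prop :=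
  exists g : Hom B A, comp g f = idm A /\ comp f g = idm B.

(** A square
<<
      A --f--> B
      |        |
      g        h
      v        v
      C --k--> D
>>  *)
Record Square := mkSquare {
  sA : C; sB : C; sC : C; sD : C;
  sf : Hom sA sB; sg : Hom sA sC; sh : Hom sB sD; sk : Hom sC sD
}.

Definition commutes (S : Square) : Prop := comp (sh S) (sf S) = comp (sk S) (sg S).

Definition is_pullback (S : Square) : Prop :=
  commutes S /\
  forall Z (p : Hom Z (sB S)) (q : Hom Z (sC S)),
    comp (sh S) p = comp (sk S) q ->
    exists u : Hom Z (sA S),
      (comp (sf S) u = p /\ comp (sg S) u = q) /\
      forall u' : Hom Z (sA S), comp (sf S) u' = p -> comp (sg S) u' = q -> u' = u.

Definition is_pushout (S : Square) : Prop :=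
  commutes S /\
  forall Z (p : Hom (sB S) Z) (q : Hom (sC S) Z),
    comp p (sf S) = comp q (sg S) ->
    exists u : Hom (sD S) Z,
      (comp u (sh S) = p /\ comp u (sk S) = q) /\
      forall u' : Hom (sD S) Z, comp u' (sh S) = p -> comp u' (sk S) = q -> u' = u.

(** A cube: top face [ctop], bottom face [cbot], and vertical morphisms from
    the top to the bottom.  The apex of the spans is the corner [sA]. *)
Record Cube := mkCube {
  ctop : Square; cbot : Square;
  va : Hom (sA ctop) (sA cbot);
  vb : Hom (sB ctop) (sB cbot);
  vc : Hom (sC ctop) (sC cbot);
  vd : Hom (sD ctop) (sD cbot)
}.

Definition back1 (Q : Cube) : Square :=
  mkSquare (sf (ctop Q)) (va Q) (vb Q) (sf (cbot Q)).
Definition back2 (Q : Cube) : Square :=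
  mkSquare (sg (ctop Q)) (va Q) (vc Q) (sg (cbot Q)).
Definition front1 (Q : Cube) : Square :=
  mkSquare (sh (ctop Q)) (vb Q) (vd Q) (sh (cbot Q)).
Definition front2 (Q : Cube) : Square :=
  mkSquare (sk (ctop Q)) (vc Q) (vd Q) (sk (cbot Q)).

Definition cube_commutes (Q : Cube) : Prop :=
  commutes (ctop Q) /\ commutes (cbot Q) /\
  commutes (back1 Q) /\ commutes (back2 Q) /\
  commutes (front1 Q) /\ commutes (front2 Q).

Variable M : MorClass.

Definition stable_system : Prop :=
  (forall A B (f : Hom A B), M f -> is_mono f) /\
  (forall A B (f : Hom A B), is_iso f -> M f) /\
  (forall A B D (f : Hom A B) (g : Hom B D), M f -> M g -> M (comp g f)) /\
  (forall S : Square, is_pullback S -> M (sk S) -> M (sf S)).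

Definition VK_cond (P : Cube -> Prop) (S : Square) : Prop :=
  is_pushout S /\
  forall Q : Cube, cbot Q = S -> cube_commutes Q -> P Q ->
    is_pullback (back1 Q) -> is_pullback (back2 Q) ->
    (is_pushout (ctop Q) <-> (is_pullback (front1 Q) /\ is_pullback (front2 Q))).

Definition is_VK (S : Square) : Prop := VK_cond (fun _ => True) S.

Definition vertical_M (Q : Cube) : Prop :=
  M (va Q) /\ M (vb Q) /\ M (vc Q) /\ M (vd Q).

Definition is_vertical_weak_VK (S : Square) : Prop := VK_cond vertical_M S.

Definition has_M_pullbacks : Prop :=
  forall (B D Cc : C) (h : Hom B D) (k : Hom Cc D), M h ->
    exists (P : C) (p1 : Hom P B) (p2 : Hom P Cc),
      is_pullback (mkSquare p1 p2 h k).

Definition has_M_pushouts : Prop :=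
  (forall (A B Cc : C) (f : Hom A B) (g : Hom A Cc), M f ->
    exists (P : C) (q1 : Hom B P) (q2 : Hom Cc P),
      is_pushout (mkSquare f g q1 q2)) /\
  (forall S : Square, is_pushout S -> M (sf S) -> M (sk S)).

Definition pushout_along_M (S : Square) : Prop :=
  is_pushout S /\ (M (sf S) \/ M (sg S)).

Definition V_iii : Prop :=
  forall S : Square, pushout_along_M S -> is_vertical_weak_VK S.

Definition H_iii : Prop :=
  forall S : Square, is_pushout S ->
    M (sf S) -> M (sg S) -> M (sh S) -> M (sk S) -> is_VK S.

Definition vertical_weak_adhesive_HLR : Prop :=
  has_M_pullbacks /\ has_M_pushouts /\ V_iii.

Definition horizontal_weak_adhesive_HLR : Prop :=
  has_M_pullbacks /\ has_M_pushouts /\ H_iii.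

Definition weak_adhesive_HLR : Prop :=
  vertical_weak_adhesive_HLR /\ horizontal_weak_adhesive_HLR.

Definition M_pushouts_stable_under_pullbacks : Prop :=
  forall Q : Cube, cube_commutes Q -> pushout_along_M (cbot Q) ->
    is_pullback (back1 Q) -> is_pullback (back2 Q) ->
    is_pullback (front1 Q) -> is_pullback (front2 Q) ->
    is_pushout (ctop Q).

End Cat.

(* The direction "front faces are pullbacks => top face is a pushout" of the VK
   property is exactly stability of pushouts under pullbacks.  For the converse,
   let P be the pullback of the bottom leg h along the vertical map d, so that
   h' factors through the mono P -> D' by a comparison map B' -> P.  Pulling the
   top pushout back along P -> D' (stability again) gives a pushout of the span
   B' <-- A' --id--> A', whence the comparison map is an isomorphism and the
   front face is the pullback P.  The one nontrivial face of that cube is a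
   pullback because the bottom square is one: by the vertical weak VK property,
   a pushout along M whose opposite leg is in M is a pullback. *)

Section Squares.
Context {C : Category}.

Lemma pullback_transpose {A B X D : C}
  {f : Hom A B} {g : Hom A X} {h : Hom B D} {k : Hom X D} :
  is_pullback (mkSquare f g h k) -> is_pullback (mkSquare g f k h).
Proof.
  intros [Hc Hu]; unfold commutes in *; simpl in *.
  split; [simpl; symmetry; exact Hc|].
  intros Z p q E.
  destruct (Hu Z q p (eq_sym E)) as [u [[E1 E2] U]].
  exists u; split; [split; assumption|].
  intros u' H1 H2; apply U; assumption.
Qed.

Lemma pushout_transpose {A B X D : C}
  {f : Hom A B} {g : Hom A X} {h : Hom B D} {k : Hom X D} :
  is_pushout (mkSquare f g h k) -> is_pushout (mkSquare g f k h).
Proof.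
  intros [Hc Hu]; unfold commutes in *; simpl in *.
  split; [simpl; symmetry; exact Hc|].
  intros Z p q E.
  destruct (Hu Z q p (eq_sym E)) as [u [[E1 E2] U]].
  exists u; split; [split; assumption|].
  intros u' H1 H2; apply U; assumption.
Qed.

Lemma pullback_trivial {A B : C} (f : Hom A B) :
  is_pullback (mkSquare f (idm A) (idm B) f).
Proof.
  split; [unfold commutes; simpl; rewrite comp_id_l, comp_id_r; reflexivity|].
  simpl; intros Z p q E; rewrite comp_id_l in E.
  exists q; split; [split; [symmetry; exact E | apply comp_id_l]|].
  intros u' _ Hq; rewrite comp_id_l in Hq; exact Hq.
Qed.

Lemma pushout_trivial {A B : C} (g : Hom A B) :
  is_pushout (mkSquare (idm A) g g (idm B)).
Proof.
  split; [unfold commutes; simpl; rewrite comp_id_l, comp_id_r; reflexivity|].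
  simpl; intros Z p q E; rewrite comp_id_r in E.
  exists q; split; [split; [symmetry; exact E | apply comp_id_r]|].
  intros u' _ Hq; rewrite comp_id_r in Hq; exact Hq.
Qed.

Lemma mono_triangle_pullback {A P D : C} (x : Hom A P) (m : Hom P D) (y : Hom A D) :
  is_mono m -> comp m x = y -> is_pullback (mkSquare x (idm A) m y).
Proof.
  intros Hm Exy; split; [unfold commutes; simpl; rewrite comp_id_r; exact Exy|].
  simpl; intros Z p q E.
  exists q; split; [split; [|apply comp_id_l]|].
  - apply Hm; rewrite comp_assoc, Exy; symmetry; exact E.
  - intros u' _ Hq; rewrite comp_id_l in Hq; exact Hq.
Qed.

Lemma pushout_along_id_is_iso {A B P : C} {f : Hom A B} {p : Hom B P} {q : Hom A P} :
  is_pushout (mkSquare f (idm A) p q) -> is_iso p.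
Proof.
  intros [Hc Hu]; unfold commutes in Hc; simpl in Hc, Hu.
  destruct (Hu B (idm B) f) as [r [[Erp Erq] _]];
    [rewrite comp_id_l, comp_id_r; reflexivity|].
  exists r; split; [exact Erp|].
  destruct (Hu P p q Hc) as [s [_ Us]].
  transitivity s; [|symmetry]; apply Us.
  - rewrite <- comp_assoc, Erp; apply comp_id_r.
  - rewrite <- comp_assoc, Erq, Hc; apply comp_id_r.
  - apply comp_id_l.
  - apply comp_id_l.
Qed.

Lemma pullback_iso_apex {A' A B X D : C} {u : Hom A' A}
  {f : Hom A B} {g : Hom A X} {h : Hom B D} {k : Hom X D} :
  is_pullback (mkSquare f g h k) -> is_iso u ->
  is_pullback (mkSquare (comp f u) (comp g u) h k).
Proof.
  intros [Hc Hu] [v [Evu Euv]]; unfold commutes in *; simpl in *.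
  split; [unfold commutes; simpl; rewrite !comp_assoc, Hc; reflexivity|].
  simpl; intros Z p q E.
  destruct (Hu Z p q E) as [w [[Ep Eq] Uw]].
  exists (comp v w); split; [split|].
  - rewrite <- comp_assoc, (comp_assoc u v w), Euv, comp_id_l; exact Ep.
  - rewrite <- comp_assoc, (comp_assoc u v w), Euv, comp_id_l; exact Eq.
  - intros w' Ep' Eq'.
    rewrite <- (Uw (comp u w')) by (rewrite comp_assoc; assumption).
    rewrite comp_assoc, Evu; symmetry; apply comp_id_l.
Qed.

End Squares.

Section Adhesive.
Context {C : Category} {M : MorClass C}.
Hypothesis HM : stable_system M.

Lemma stable_system_id {X : C} : M _ _ (idm X).
Proof.
  destruct HM as (_ & Hiso & _).
  apply Hiso; exists (idm X); split; apply comp_id_l.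
Qed.

Lemma stable_system_mono {A B : C} {f : Hom A B} : M _ _ f -> is_mono f.
Proof. apply (proj1 HM). Qed.

Lemma stable_system_pullback {A B X D : C}
  {f : Hom A B} {g : Hom A X} {h : Hom B D} {k : Hom X D} :
  is_pullback (mkSquare f g h k) -> M _ _ k -> M _ _ f.
Proof. destruct HM as (_ & _ & _ & Hpb); apply (Hpb (mkSquare f g h k)). Qed.

(* Over the bottom square take the cube whose top is the trivial pushout of
   [id] and [g]: its first front face is the transposed bottom square. *)
Lemma M_pushout_is_pullback (HV : V_iii M) {A B X D : C}
  {f : Hom A B} {g : Hom A X} {h : Hom B D} {k : Hom X D} :
  is_pushout (mkSquare f g h k) -> M _ _ f -> M _ _ k ->
  is_pullback (mkSquare f g h k).
Proof.
  intros Hpo Hf Hk.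
  destruct (HV _ (conj Hpo (or_introl Hf))) as [_ HVK].
  pose proof (proj1 Hpo) as Hc; unfold commutes in Hc; simpl in Hc.
  set (Q := @mkCube _ (mkSquare (idm A) g g (idm X)) (mkSquare f g h k)
              (idm A) f (idm X) k).
  assert (Hcc : cube_commutes Q).
  { unfold cube_commutes, commutes; simpl.
    rewrite !comp_id_l, !comp_id_r.
    repeat split; [exact Hc | symmetry; exact Hc]. }
  assert (Hvert : vertical_M M Q)
    by (repeat split; simpl; auto using stable_system_id).
  assert (Hb1 : is_pullback (back1 Q))
    by (apply mono_triangle_pullback; [apply stable_system_mono, Hf | apply comp_id_r]).
  assert (Hb2 : is_pullback (back2 Q)) by apply (pullback_trivial g).
  apply pullback_transpose.
  exact (proj1 (proj1 (HVK Q eq_refl Hcc Hvert Hb1 Hb2) (pushout_trivial g))).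
Qed.

Lemma pushout_of_pullback_faces (Hstab : M_pushouts_stable_under_pullbacks M)
  (Q : Cube C) :
  commutes (ctop Q) -> pushout_along_M M (cbot Q) ->
  is_pullback (back1 Q) -> is_pullback (back2 Q) ->
  is_pullback (front1 Q) -> is_pullback (front2 Q) ->
  is_pushout (ctop Q).
Proof.
  intros Ht Hbot Hb1 Hb2 Hf1 Hf2.
  apply Hstab; try assumption.
  repeat split; first [exact Ht | apply Hbot | apply Hb1 | apply Hb2 | apply Hf1 | apply Hf2].
Qed.

Section FrontFace.
Context {A' B' X' D' A B X D : C}
  {f' : Hom A' B'} {g' : Hom A' X'} {h' : Hom B' D'} {k' : Hom X' D'}
  {f : Hom A B} {g : Hom A X} {h : Hom B D} {k : Hom X D}
  {a : Hom A' A} {b : Hom B' B} {c : Hom X' X} {d : Hom D' D}.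
Hypotheses (Hbot : is_pullback (mkSquare f g h k))
  (Hback2 : is_pullback (mkSquare g' a c g))
  (Htop : is_pushout (mkSquare f' g' h' k'))
  (Hfront1 : comp d h' = comp h b) (Hfront2 : comp d k' = comp k c).

Lemma pullback_along_factor {P : C} (e : Hom P B) (m : Hom P D') (b0 : Hom B' P) :
  is_mono g' -> is_mono m -> comp h e = comp d m -> comp m b0 = h' ->
  is_pullback (mkSquare (comp b0 f') g' m k').
Proof.
  intros Hg' Hm He Eb0.
  pose proof (proj1 Htop) as Htc; unfold commutes in Htc; simpl in Htc.
  split; [unfold commutes; simpl; rewrite comp_assoc, Eb0; exact Htc|].
  simpl; intros Z p q E.
  assert (Ebot : comp h (comp e p) = comp k (comp c q))
    by (rewrite !comp_assoc, He, <- Hfront2, <- !comp_assoc, E; reflexivity).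
  destruct (proj2 Hbot Z _ _ Ebot) as [w [[_ Ew] _]].
  destruct (proj2 Hback2 Z q w (eq_sym Ew)) as [u [[Eu _] _]]; simpl in Eu.
  exists u; split; [split; [|exact Eu]|].
  - apply Hm; rewrite !comp_assoc, Eb0, Htc, <- comp_assoc, Eu; symmetry; exact E.
  - intros u' _ Eu'; apply Hg'; rewrite Eu, Eu'; reflexivity.
Qed.

Lemma front1_pullback (HPB : has_M_pullbacks M)
  (Hstab : M_pushouts_stable_under_pullbacks M) :
  M _ _ h -> M _ _ g' -> is_mono h' -> is_pullback (mkSquare h' b d h).
Proof.
  intros Hh Hg' Hh'.
  destruct (HPB _ _ _ h d Hh) as (P & e & m & HP).
  assert (Hm : is_mono m)
    by exact (stable_system_mono (stable_system_pullback (pullback_transpose HP) Hh)).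
  destruct (proj2 HP B' b h' (eq_sym Hfront1)) as [b0 [[Eb Eh'] _]]; simpl in Eb, Eh'.
  assert (Hpo : is_pushout (mkSquare f' (idm A') b0 (comp b0 f'))).
  { apply (pushout_of_pullback_faces Hstab
             (@mkCube _ (mkSquare f' (idm A') b0 (comp b0 f')) (mkSquare f' g' h' k')
                (idm A') (idm B') g' m)); simpl.
    - unfold commutes; simpl; symmetry; apply comp_id_r.
    - split; [exact Htop | right; exact Hg'].
    - apply pullback_trivial.
    - apply mono_triangle_pullback; [apply stable_system_mono, Hg' | apply comp_id_r].
    - apply mono_triangle_pullback; assumption.
    - apply (pullback_along_factor e); auto using stable_system_mono.
      exact (proj1 HP). }
  rewrite <- Eb, <- Eh'.
  exact (pullback_iso_apex (pullback_transpose HP) (pushout_along_id_is_iso Hpo)).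
Qed.

End FrontFace.

Lemma H_iii_of_stability (HPB : has_M_pullbacks M) (HPO : has_M_pushouts M)
  (HV : V_iii M) (Hstab : M_pushouts_stable_under_pullbacks M) : H_iii M.
Proof.
  intros [A B X D f g h k] Hpo Hf Hg Hh Hk; simpl in *.
  pose proof (M_pushout_is_pullback HV Hpo Hf Hk) as Hbot.
  split; [exact Hpo|].
  intros [[A' B' X' D' f' g' h' k'] bot a b c d] Ebot Hcc _ Hb1 Hb2.
  simpl in Ebot; subst bot.
  unfold back1, back2, front1, front2 in *; simpl in *.
  destruct Hcc as (Htc & _ & _ & _ & Hfr1 & Hfr2); unfold commutes in *; simpl in *.
  split.
  - intro Htop.
    pose proof (stable_system_pullback Hb1 Hf) as Hf'.
    pose proof (stable_system_pullback Hb2 Hg) as Hg'.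
    pose proof (proj2 HPO _ (pushout_transpose Htop) Hg') as Hh'.
    pose proof (proj2 HPO _ Htop Hf') as Hk'.
    split.
    + exact (front1_pullback Hbot Hb2 Htop Hfr1 Hfr2 HPB Hstab
               Hh Hg' (stable_system_mono Hh')).
    + exact (front1_pullback (pullback_transpose Hbot) Hb1 (pushout_transpose Htop)
               Hfr2 Hfr1 HPB Hstab Hk Hf' (stable_system_mono Hk')).
  - intros [Hf1 Hf2].
    apply (pushout_of_pullback_faces Hstab
             (@mkCube _ (mkSquare f' g' h' k') (mkSquare f g h k) a b c d));
      simpl; auto.
    split; [exact Hpo | left; exact Hf].
Qed.

End Adhesive.

Theorem mainTheorem10 (C : Category) (M : MorClass C) :
  stable_system M ->
  vertical_weak_adhesive_HLR M ->
  M_pushouts_stable_under_pullbacks M ->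
  horizontal_weak_adhesive_HLR M /\ weak_adhesive_HLR M.
Proof.
  intros HM [HPB [HPO HV]] Hstab.
  assert (Hhor : horizontal_weak_adhesive_HLR M)
    by exact (conj HPB (conj HPO (H_iii_of_stability HM HPB HPO HV Hstab))).
  exact (conj Hhor (conj (conj HPB (conj HPO HV)) Hhor)).
Qed.
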